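(* Let $R=K[X_1,\dots,X_d]$ be a polynomial ring over a field $K$, $I$ a monomial ideal of $R$ and $J$ any ideal of $R$. Then $I:_RJ^\infty$ is a monomial ideal of $R$.
   Context: $I:_RJ^\infty=\bigcup_k(I:_RJ^k)$. *)

From HB Require Import structures.
From mathcomp Require Import all_boot all_algebra.
From mathcomp Require Import mpoly.
Set Implicit Arguments. Unset Strict Implicit. Unset Printing Implicit Defensive.
Import GRing.Theory.
Local Open Scope ring_scope.

Section IdealDefs.
Variables (K : fieldType) (d : nat).
Local Notation P := {mpoly K[d]}.

Definition subsetR := P -> Prop.

Definition is_ideal (I : subsetR) : Prop :=
  [/\ I 0, (forall f g, I f -> I g -> I (f + g)) & (forall r f, I f -> I (r * f))].

Definition ideal_gen (S : subsetR) : subsetR := fun f =>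
  exists rs : seq (P * P),
    (forall x, x \in rs -> S x.2) /\ f = \sum_(x <- rs) x.1 * x.2.

Definition ideal_prod (I J : subsetR) : subsetR :=
  ideal_gen (fun h => exists f g, [/\ I f, J g & h = f * g]).

Fixpoint ideal_pow (J : subsetR) (k : nat) : subsetR :=
  match k with
  | 0 => ideal_gen (fun h => h = 1)
  | k'.+1 => ideal_prod (ideal_pow J k') J
  end.

Definition colon (I J : subsetR) : subsetR := fun f => forall g, J g -> I (f * g).

Definition saturation (I J : subsetR) : subsetR := fun f =>
  exists k, colon I (ideal_pow J k) f.

Definition monomial_ideal (I : subsetR) : Prop :=
  exists S : subsetR,
    (forall m, S m -> exists e : 'X_{1..d}, m = 'X_[e]) /\
    (forall f, I f <-> ideal_gen S f).

End IdealDefs.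

From HB Require Import structures.
From mathcomp Require Import all_boot all_algebra.
From mathcomp Require Import mpoly.
From mathcomp Require Import boolp.
Set Implicit Arguments. Unset Strict Implicit. Unset Printing Implicit Defensive.
Import GRing.Theory.
Local Open Scope ring_scope.

(* Let f J^k lie in I and let X^e be a monomial of f; we find N with
   X^e J^N in I.  Call a set A of variables good if X^e times some monomial in
   the variables outside A lies in I.  If A is bad, every g in J has only
   monomials of positive degree in the variables of A: otherwise, comparing the
   parts of lowest A-degree in f g^k, which lies in I, shows that every
   monomial of f, X^e included, lies in I : (x_j, j \notin A)^oo.  Hence every
   monomial of J^N has A-degree at least N for each bad A.  Take c bounding
   the exponents of witnesses for all good A, and N = d c + 1.  A monomial
   X^m of J^N has degree at most d c in the variables of A = {i | m_i < c},
   so this A is good, and its witness X^(e+b) divides X^(e+m): b vanishes on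
   A and is at most c <= m off A. *)

Lemma finite_exists_bound (T : finType) (Q : T -> nat -> Prop) :
  (forall x, exists n, Q x n) -> exists c, forall x, exists2 n, (n <= c)%N & Q x n.
Proof.
move=> HQ; suff [c Hc] : exists c, forall x, x \in enum T -> exists2 n, (n <= c)%N & Q x n.
  by exists c => x; apply: Hc; rewrite mem_enum.
elim: (enum T) => [|x s [c Hc]]; first by exists 0%N.
have [n Qxn] := HQ x; exists (maxn n c) => y /predU1P [-> | /Hc [m lemc Qym]].
  by exists n; rewrite ?leq_maxl.
by exists m; rewrite ?(leq_trans lemc) ?leq_maxr.
Qed.

Section Ideals.
Variables (K : fieldType) (d : nat).
Local Notation P := {mpoly K[d]}.
Implicit Types (S I J : P -> Prop) (f g : P).

Lemma ideal_sum I (T : eqType) (r : seq T) (F : T -> P) :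
  is_ideal I -> (forall x, x \in r -> I (F x)) -> I (\sum_(x <- r) F x).
Proof.
case=> I0 ID _; elim: r => [|x r IHr] Ir; first by rewrite big_nil.
rewrite big_cons; apply: ID; first by apply: Ir; rewrite mem_head.
by apply: IHr => y ry; apply: Ir; rewrite inE ry orbT.
Qed.

Lemma is_ideal_gen S : is_ideal (ideal_gen S).
Proof.
split.
- by exists [::]; rewrite big_nil; split=> //.
- move=> _ _ [r1 [S1 ->]] [r2 [S2 ->]]; exists (r1 ++ r2); rewrite big_cat.
  by split=> // x; rewrite mem_cat => /orP[/S1|/S2].
- move=> a _ [r [Sr ->]]; exists [seq (a * x.1, x.2) | x <- r]; split.
    by move=> _ /mapP[x rx ->]; apply: Sr rx.
  by rewrite big_map mulr_sumr; apply: eq_bigr => x _; rewrite mulrA.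
Qed.

Lemma mem_ideal_gen S f : S f -> ideal_gen S f.
Proof.
by move=> Sf; exists [:: (1, f)]; rewrite big_seq1 mul1r; split=> // x /[1!inE] /eqP ->.
Qed.

Lemma ideal_gen_sub S I : is_ideal I -> (forall f, S f -> I f) ->
  forall f, ideal_gen S f -> I f.
Proof.
move=> idealI SI _ [r [Sr ->]]; apply: ideal_sum => // x rx.
by case: idealI => _ _ IM; apply/IM/SI/Sr.
Qed.

Lemma is_ideal_pow J k : is_ideal (ideal_pow J k).
Proof. by case: k => [|k]; apply: is_ideal_gen. Qed.

Lemma ideal_powS_sub J k f : ideal_pow J k.+1 f -> ideal_pow J k f.
Proof.
apply: ideal_gen_sub; first exact: is_ideal_pow.
move=> _ [a [b [Ja Jb ->]]]; rewrite mulrC.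
by case: (is_ideal_pow J k) => _ _ IM; apply: IM.
Qed.

Lemma ideal_pow_le J k l f : (k <= l)%N -> ideal_pow J l f -> ideal_pow J k f.
Proof.
elim: l => [|l IHl]; first by rewrite leqn0 => /eqP ->.
by rewrite leq_eqVlt ltnS => /orP[/eqP -> // | lekl] /ideal_powS_sub; apply: IHl.
Qed.

Lemma ideal_pow_expr J g k : J g -> ideal_pow J k (g ^+ k).
Proof.
move=> Jg; elim: k => [|k IHk]; first exact: mem_ideal_gen.
by rewrite exprSr; apply: mem_ideal_gen; exists (g ^+ k), g.
Qed.

Lemma is_ideal_saturation I J : is_ideal I -> is_ideal (saturation I J).
Proof.
case=> I0 ID IM; split.
- by exists 0%N => g _; rewrite mul0r.
- move=> f g [a Ha] [b Hb]; exists (maxn a b) => h Jh; rewrite mulrDl; apply: ID.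
    by apply: Ha; apply: ideal_pow_le Jh; rewrite leq_maxl.
  by apply: Hb; apply: ideal_pow_le Jh; rewrite leq_maxr.
- by move=> r f [a Ha]; exists a => h Jh; rewrite -mulrA; apply/IM/Ha.
Qed.

Lemma ideal_mpolyXD I a b : is_ideal I -> I 'X_[a] -> I 'X_[a + b].
Proof. by case=> _ _ IM Ia; rewrite addmC mpolyXD; apply: IM. Qed.

End Ideals.

Section MonomialSupport.
Variables (n : nat) (R : nzRingType).
Implicit Types (p q : {mpoly R[n]}) (M : 'X_{1..n} -> Prop).

Definition monomials_in M p := forall m, m \in msupp p -> M m.

Lemma monomials_in0 M : monomials_in M 0.
Proof. by move=> m; rewrite msupp0. Qed.

Lemma monomials_inD M p q :
  monomials_in M p -> monomials_in M q -> monomials_in M (p + q).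
Proof. by move=> Mp Mq m /msuppD_le; rewrite mem_cat => /orP[/Mp|/Mq]. Qed.

Lemma monomials_inB M p q :
  monomials_in M p -> monomials_in M q -> monomials_in M (p - q).
Proof. by move=> Mp Mq m /msuppB_le; rewrite mem_cat => /orP[/Mp|/Mq]. Qed.

Lemma monomials_inM M1 M2 M p q :
  (forall a b, M1 a -> M2 b -> M (a + b)%MM) ->
  monomials_in M1 p -> monomials_in M2 q -> monomials_in M (p * q).
Proof.
move=> M12 Mp Mq m /msuppM_le /allpairsP[[a b] /= [pa qb ->]].
by apply: M12; [apply: Mp | apply: Mq].
Qed.

Lemma monomials_inX M m : M m -> monomials_in M 'X_[m].
Proof. by move=> Mm m'; rewrite msuppX inE => /eqP ->. Qed.

Definition mrestrict (b : pred 'X_{1..n}) p : {mpoly R[n]} :=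
  \sum_(m <- msupp p | b m) p@_m *: 'X_[m].

Lemma mcoeff_mrestrict b p m : (mrestrict b p)@_m = if b m then p@_m else 0.
Proof.
rewrite /mrestrict raddf_sum big_mkcond /=.
under eq_bigr => m' _ do rewrite mcoeffZ mcoeffX.
have [p_m | Np_m] := boolP (m \in msupp p).
  rewrite (bigD1_seq m) ?msupp_uniq //= eqxx mulr1 big1 ?addr0 // => m' /negbTE ->.
  by rewrite mulr0 if_same.
rewrite big1_seq => [|m' /andP[_ p_m']]; last first.
  suff /negbTE -> : m' != m by rewrite mulr0 if_same.
  by apply: contraNneq Np_m => <-.
by move: Np_m; rewrite -mcoeff_eq0 => /eqP ->; rewrite if_same.
Qed.

Lemma msupp_mrestrict b p m : (m \in msupp (mrestrict b p)) = b m && (m \in msupp p).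
Proof. by rewrite !mcoeff_msupp mcoeff_mrestrict; case: (b m); rewrite ?eqxx. Qed.

Lemma mrestrictC b p : mrestrict (predC b) p = p - mrestrict b p.
Proof.
by apply/mpolyP => m; rewrite mcoeffB !mcoeff_mrestrict /=; case: (b m); rewrite ?subrr ?subr0.
Qed.

End MonomialSupport.

Section Grading.
Variables (n : nat) (mf : measure n).

Section Ring.
Variable R : nzRingType.
Implicit Types p q : {mpoly R[n]}.

Lemma mcoeff_pihomog k p m : (pihomog mf k p)@_m = if mf m == k then p@_m else 0.
Proof. exact: mcoeff_mrestrict. Qed.

Lemma msupp_pihomog k p m :
  (m \in msupp (pihomog mf k p)) = (mf m == k) && (m \in msupp p).
Proof. exact: msupp_mrestrict. Qed.

Lemma pihomog_eq0 k p : monomials_in (fun m => mf m != k) p -> pihomog mf k p = 0.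
Proof.
move=> Mp; apply/mpolyP => m; rewrite mcoeff_pihomog mcoeff0.
case: (mf m =P k) => // mf_m; apply/eqP; rewrite mcoeff_eq0; apply/negP => /Mp.
by rewrite mf_m eqxx.
Qed.

Lemma monomials_in_sub_pihomog k p : monomials_in (fun m => k <= mf m)%N p ->
  monomials_in (fun m => k < mf m)%N (p - pihomog mf k p).
Proof.
move=> Mp m; rewrite mcoeff_msupp mcoeffB mcoeff_pihomog.
case: (mf m =P k) => [_ | /eqP mf_m]; first by rewrite subrr eqxx.
by rewrite subr0 -mcoeff_msupp ltn_neqAle eq_sym mf_m => /Mp.
Qed.

Lemma pihomogM_lowest k l p q :
  monomials_in (fun m => k <= mf m)%N p -> monomials_in (fun m => l <= mf m)%N q ->
  pihomog mf (k + l) (p * q) = pihomog mf k p * pihomog mf l q.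
Proof.
move=> Mp Mq; set pk := pihomog mf k p; set ql := pihomog mf l q.
have -> : p * q = pk * ql + (pk * (q - ql) + (p - pk) * q).
  by rewrite mulrBr mulrBl addrA [pk * ql + _]addrC subrK addrC subrK.
rewrite raddfD /= pihomog_dE ?dhomogM ?pihomogP // pihomog_eq0 ?addr0 //.
apply: monomials_inD.
  apply: (monomials_inM (M1 := fun a => mf a == k)) (monomials_in_sub_pihomog Mq).
    by move=> a b /eqP mf_a lt_b; rewrite mfD mf_a eqn_add2l gtn_eqF.
  by move=> a; rewrite msupp_pihomog => /andP[].
apply: monomials_inM (monomials_in_sub_pihomog Mp) Mq.
by move=> a b lt_a le_b; rewrite mfD gtn_eqF // -addSn leq_add.
Qed.

End Ring.

Lemma monomials_in_mulr_cancel (R : idomainType) (M : pred 'X_{1..n})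
    (g h : {mpoly R[n]}) :
  (forall a b, M a -> M (a + b)%MM) ->
  (forall a b, mf b = 0%N -> M (a + b)%MM -> M a) ->
  (exists2 m, m \in msupp g & mf m = 0%N) ->
  monomials_in M (h * g) -> monomials_in M h.
Proof.
(* With h' the part of h outside M and k0 its least degree, the degree-k0 part
   of h' g is the degree-k0 part of h' times the degree-0 part of g: nonzero
   since R is a domain, and with monomials outside M by [Msat]. *)
move=> Mup Msat [m0 g_m0 mf_m0] Mhg m h_m; apply/contraT => NMm.
pose h' := mrestrict (predC M) h.
have Mh'g : monomials_in M (h' * g).
  rewrite /h' mrestrictC mulrBl; apply: monomials_inB => //.
  apply: monomials_inM (fun a b Ma _ => Mup a b Ma) _ (fun _ _ => I) => a.
  by rewrite msupp_mrestrict => /andP[].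
have ex_k : exists k, has (fun a => mf a == k) (msupp h').
  by exists (mf m); apply/hasP; exists m; rewrite ?msupp_mrestrict /= ?NMm.
case: (ex_minnP ex_k) => k0 /hasP[a0 h'_a0 /eqP mf_a0] k0_min.
have Mh' : monomials_in (fun a => k0 <= mf a)%N h'.
  by move=> a h'_a; apply: k0_min; apply/hasP; exists a.
have nz_of m' (r : {mpoly R[n]}) : m' \in msupp r -> r != 0.
  by apply: contraTneq => ->; rewrite msupp0.
have /nz_of nz_h'k0 : a0 \in msupp (pihomog mf k0 h').
  by rewrite msupp_pihomog mf_a0 eqxx.
have /nz_of nz_g0 : m0 \in msupp (pihomog mf 0 g).
  by rewrite msupp_pihomog mf_m0 eqxx.
have [mu low_mu] : exists mu, mu \in msupp (pihomog mf k0 h' * pihomog mf 0 g).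
  move: (mulf_neq0 nz_h'k0 nz_g0); rewrite -msupp_eq0.
  by case: msupp => [|mu s] // _; exists mu; rewrite mem_head.
have /negP[] : ~~ M mu.
  move: mu low_mu; apply: (monomials_inM (M1 := fun a => ~~ M a) (M2 := fun b => mf b = 0%N)).
  - by move=> a b NMa mf_b; apply: contra NMa; apply: Msat.
  - by move=> a; rewrite msupp_pihomog msupp_mrestrict => /and3P[].
  - by move=> b; rewrite msupp_pihomog => /andP[/eqP].
apply: Mh'g; move: low_mu; rewrite -pihomogM_lowest // addn0 msupp_pihomog.
by case/andP.
Qed.

End Grading.

Section MonomialIdeals.
Variables (K : fieldType) (d : nat).
Implicit Types (I J : {mpoly K[d]} -> Prop) (f : {mpoly K[d]}).

Lemma is_ideal_monomials_in (M : 'X_{1..d} -> Prop) :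
  (forall a b, M a -> M (a + b)%MM) -> is_ideal (monomials_in M : {mpoly K[d]} -> Prop).
Proof.
move=> Mup; split; [exact: monomials_in0 | exact: monomials_inD |].
move=> r f; apply: (monomials_inM (M1 := fun _ => True)) (fun _ _ => I) => a b _ Mb.
by rewrite addmC; apply: Mup.
Qed.

Lemma ideal_monomials_in I f : is_ideal I -> monomials_in (fun m => I 'X_[m]) f -> I f.
Proof.
move=> idealI Mf; rewrite (mpolyE f); apply: ideal_sum => // m f_m.
by rewrite -mul_mpolyC; case: idealI => _ _ IM; apply/IM/Mf.
Qed.

Lemma monomial_idealP I : is_ideal I ->
  monomial_ideal I <-> forall f, I f -> monomials_in (fun m => I 'X_[m]) f.
Proof.
move=> idealI; split.
  case=> S [S_mono SI] f /SI; apply: ideal_gen_sub.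
    by apply: is_ideal_monomials_in => a b; apply: ideal_mpolyXD.
  move=> _ /[dup] /S_mono[m ->] /mem_ideal_gen /SI Im; exact: monomials_inX.
move=> MI; exists (fun p => exists2 m, p = 'X_[m] & I p); split.
  by move=> _ [m -> _]; exists m.
move=> f; split=> [If | ]; last by apply: ideal_gen_sub => // p [m _ Ip].
apply: ideal_monomials_in (is_ideal_gen _) _ => m f_m.
by apply: mem_ideal_gen; exists m; last apply: MI f_m.
Qed.

Lemma ideal_pow_monomials_ge (mf : measure d) J k f :
  (forall g, J g -> monomials_in (fun m => 0 < mf m)%N g) ->
  ideal_pow J k f -> monomials_in (fun m => k <= mf m)%N f.
Proof.
move=> Jpos; elim: k f => [|k IHk] f; first by move=> _ m _.
apply: ideal_gen_sub.
  by apply: is_ideal_monomials_in => a b le_a; rewrite mfD (leq_trans le_a) ?leq_addr.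
move=> _ [a [b [Ja Jb ->]]]; apply: monomials_inM (IHk _ Ja) (Jpos _ Jb).
by move=> x y le_x lt_y; rewrite mfD -addn1 leq_add.
Qed.

End MonomialIdeals.

Definition mdeg_on n (A : {set 'I_n}) (m : 'X_{1..n}) : nat := (\sum_(i in A) m i)%N.

Section PartialDegree.
Variables (n : nat) (A : {set 'I_n}).
Implicit Types m : 'X_{1..n}.

Lemma mdeg_on0 : mdeg_on A 0%MM = 0%N.
Proof. by rewrite /mdeg_on big1 // => i _; rewrite mnm0E. Qed.

Lemma mdeg_onD : {morph mdeg_on A : m1 m2 / (m1 + m2)%MM >-> (m1 + m2)%N}.
Proof. by move=> m1 m2; rewrite /mdeg_on -big_split; apply: eq_bigr => i _; rewrite mnmDE. Qed.

HB.instance Definition _ := isMeasure.Build n (mdeg_on A) mdeg_on0 mdeg_onD.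

Lemma mnm_le_mdeg_on m i : i \in A -> (m i <= mdeg_on A m)%N.
Proof. by move=> Ai; rewrite /mdeg_on (bigD1 i) //= leq_addr. Qed.

Lemma mdeg_on_le m c : (forall i, i \in A -> m i <= c)%N -> (mdeg_on A m <= n * c)%N.
Proof.
move=> le_mc; apply: (@leq_trans (\sum_(i in A) c)); first exact: leq_sum.
by rewrite sum_nat_const leq_mul2r -[X in (_ <= X)%N]card_ord max_card orbT.
Qed.

End PartialDegree.

Section Saturation.
Variables (K : fieldType) (d : nat) (I J : {mpoly K[d]} -> Prop).
Hypotheses (idealI : is_ideal I) (monoI : monomial_ideal I).

(* [sat_off A m] says that X^m lies in I : (x_j, j \notin A)^oo. *)
Definition sat_off (A : {set 'I_d}) (m : 'X_{1..d}) : Prop :=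
  exists2 b, mdeg_on A b = 0%N & I 'X_[m + b].

Lemma sat_offD A a b : sat_off A a -> sat_off A (a + b).
Proof.
case=> c c0 Iac; exists c => //.
by rewrite -addmA [(b + c)%MM]addmC addmA; apply: ideal_mpolyXD.
Qed.

Lemma sat_offK A a b : mdeg_on A b = 0%N -> sat_off A (a + b) -> sat_off A a.
Proof. by move=> b0 [c c0 Iabc]; exists (b + c)%MM; rewrite ?mdeg_onD ?b0 ?c0 ?addmA. Qed.

Variables (f : {mpoly K[d]}) (k : nat) (e : 'X_{1..d}).
Hypotheses (fJkI : colon I (ideal_pow J k) f) (f_e : e \in msupp f).

Lemma J_mdeg_on_gt0 A : ~ sat_off A e ->
  forall g, J g -> monomials_in (fun m => 0 < mdeg_on A m)%N g.
Proof.
move=> Ne g Jg m g_m; rewrite lt0n; apply/negP => /eqP m0; apply: Ne.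
pose M m := `[< sat_off A m >].
have Mfg : monomials_in M (f * g ^+ k).
  move=> m' /((monomial_idealP idealI).1 monoI _ (fJkI (ideal_pow_expr k Jg))) Im'.
  by apply/asboolP; exists 0%MM; rewrite ?mdeg_on0 ?addm0.
have cancel_g h : monomials_in M (h * g) -> monomials_in M h.
  apply: (monomials_in_mulr_cancel (mf := mdeg_on A)).
  - by move=> a b /asboolP /(sat_offD b) /asboolP.
  - by move=> a b b0 /asboolP /(sat_offK b0) /asboolP.
  - by exists m.
have Mf j : monomials_in M (f * g ^+ j) -> monomials_in M f.
  elim: j => [|j IHj]; first by rewrite expr0 mulr1.
  by rewrite exprSr mulrA => /cancel_g /IHj.
exact/asboolP/(Mf k Mfg).
Qed.

Lemma sat_off_bounded_witness : exists c, forall A, sat_off A e ->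
  exists2 b, mdeg_on A b = 0%N /\ I 'X_[e + b] & forall i, (b i <= c)%N.
Proof.
pose Q A c := sat_off A e ->
  exists2 b, mdeg_on A b = 0%N /\ I 'X_[e + b] & forall i, (b i <= c)%N.
have /finite_exists_bound[c Hc] : forall A, exists c, Q A c.
  move=> A; have [[b b0 Ieb] | Ne] := pselect (sat_off A e); last by exists 0%N.
  by exists (\max_i b i) => _; exists b => // i; apply: leq_bigmax.
exists c => A eA; have [c' le_c'c /(_ eA)[b Hb le_bc']] := Hc A.
by exists b => // i; apply: leq_trans (le_bc' i) le_c'c.
Qed.

Lemma saturation_mpolyX : saturation I J 'X_[e].
Proof.
have [c Hc] := sat_off_bounded_witness.
exists (d * c).+1 => g Jg; apply: ideal_monomials_in idealI _.
apply: (monomials_inM (M1 := eq e)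
  (M2 := fun m => forall A, ~ sat_off A e -> (d * c < mdeg_on A m)%N)).
- move=> _ m <- big_m; pose A := [set i | (m i < c)%N].
  have eA : sat_off A e.
    apply: contrapT => /big_m; rewrite ltnNge mdeg_on_le // => i.
    by rewrite inE => /ltnW.
  have [b [b0 Ieb] le_bc] := Hc A eA.
  have le_bm : (b <= m)%MM.
    apply/mnm_lepP => i; have [Ai | NAi] := boolP (i \in A).
      by rewrite (leq_trans (mnm_le_mdeg_on b Ai)) ?b0.
    by rewrite inE -leqNgt in NAi; apply: leq_trans NAi.
  by rewrite -(submK le_bm) [(m - b + b)%MM]addmC addmA; apply: ideal_mpolyXD.
- exact: monomials_inX.
- by move=> m g_m A NeA; apply: ideal_pow_monomials_ge (J_mdeg_on_gt0 NeA) Jg m g_m.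
Qed.

End Saturation.

Theorem lemma6p1 (K : fieldType) (d : nat) (I J : {mpoly K[d]} -> Prop) :
  is_ideal I -> monomial_ideal I -> is_ideal J ->
  monomial_ideal (saturation I J).
Proof.
(* J need not be an ideal: ideal_pow J k is generated by k-fold products anyway. *)
move=> idealI monoI _.
apply/(monomial_idealP (is_ideal_saturation J idealI)) => f [k fJkI] e f_e.
exact: (saturation_mpolyX (J := J) idealI monoI fJkI f_e).
Qed.
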